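(* Let $K$ be a field, $E$ a directed graph, and $L=L_K(E)$. Let $c$ and $d$ be distinct cycles in $E$ (that is, $c$ and $d$ have distinct sets of edges), neither of which has an exit, and let $f(x),g(x)\in K[x]$ be polynomials with nonzero constant terms. Then $\langle f(c)\rangle\langle g(d)\rangle=0$.
   Context: A directed graph $E=(E^0,E^1,r,s)$ has vertex set $E^0\neq\emptyset$, edge set $E^1$, and range and source maps $r,s:E^1\to E^0$ (no cardinality restrictions). A path is a finite sequence $e_1\cdots e_n$ of edges with $r(e_i)=s(e_{i+1})$. A cycle is a path $e_1\cdots e_n$ with $r(e_n)=s(e_1)$ and $s(e_i)\neq s(e_j)$ for $i\neq j$. An exit of a path $e_1\cdots e_n$ is an edge $f\notin\{e_1,\dots,e_n\}$ with $s(f)=s(e_i)$ for some $i$. The Leavitt path algebra $L_K(E)$ is the $K$-algebra generated by $\{v:v\in E^0\}\cup\{e,e^*:e\in E^1\}$ subject to: $vw=\delta_{v,w}v$; $s(e)e=er(e)=e$; $r(e)e^*=e^*s(e)=e^*$; $e^*f=\delta_{e,f}r(e)$ for $e,f\in E^1$; and $v=\sum_{e\in s^{-1}(v)}ee^*$ whenever $s^{-1}(v)$ is finite and nonempty. For a path $\mu=e_1\cdots e_n$, $\mu$ is also viewed as the product $e_1\cdots e_n\in L_K(E)$. For a cycle $c$ based at $v$ and $f(x)=\sum_{i=0}^n k_ix^i\in K[x]$, $f(c):=k_0v+\sum_{i=1}^n k_ic^i$. $\langle X\rangle$ denotes the two-sided ideal generated by $X$. *)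

(* Leavitt path algebra L_K(E) presented as the algebra of
   formal terms modulo the least congruence generated by the (nonunital,
   associative) K-algebra axioms and the Leavitt path algebra relations. *)
From HB Require Import structures.
From mathcomp Require Import all_boot all_order all_algebra.
From Stdlib Require List.
Set Implicit Arguments.
Unset Strict Implicit.
Unset Printing Implicit Defensive.
Import GRing.Theory.
Local Open Scope ring_scope.

Section Leavitt.
Variables (K : fieldType) (V Ed : Type) (s r : Ed -> V).

(* generators: vertices v, real edges e, ghost edges e^* *)
Inductive lgen : Type := GV of V | GE of Ed | GS of Ed.

Inductive lterm : Type :=
| LZero : lterm
| LGen : lgen -> lterm
| LAdd : lterm -> lterm -> lterm
| LMul : lterm -> lterm -> lterm
| LScale : K -> lterm -> lterm.

Definition lv (v : V) := LGen (GV v).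
Definition le (e : Ed) := LGen (GE e).
Definition ls (e : Ed) := LGen (GS e).

Definition src_enum (v : V) (l : list Ed) : Prop :=
  l <> nil /\ List.NoDup l /\ forall e, List.In e l <-> s e = v.

Definition lsum (l : list lterm) : lterm := foldr LAdd LZero l.

Inductive lequiv : lterm -> lterm -> Prop :=
| leq_refl x : lequiv x x
| leq_sym x y : lequiv x y -> lequiv y x
| leq_trans x y z : lequiv x y -> lequiv y z -> lequiv x z
| leq_add x x' y y' : lequiv x x' -> lequiv y y' -> lequiv (LAdd x y) (LAdd x' y')
| leq_mul x x' y y' : lequiv x x' -> lequiv y y' -> lequiv (LMul x y) (LMul x' y')
| leq_scale k x x' : lequiv x x' -> lequiv (LScale k x) (LScale k x')
| leq_addA x y z : lequiv (LAdd x (LAdd y z)) (LAdd (LAdd x y) z)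
| leq_addC x y : lequiv (LAdd x y) (LAdd y x)
| leq_add0 x : lequiv (LAdd x LZero) x
| leq_addN x : lequiv (LAdd x (LScale (-1) x)) LZero
| leq_scale1 x : lequiv (LScale 1 x) x
| leq_scaleA a b x : lequiv (LScale a (LScale b x)) (LScale (a * b) x)
| leq_scaleDl a b x : lequiv (LScale (a + b) x) (LAdd (LScale a x) (LScale b x))
| leq_scaleDr a x y : lequiv (LScale a (LAdd x y)) (LAdd (LScale a x) (LScale a y))
| leq_mulA x y z : lequiv (LMul x (LMul y z)) (LMul (LMul x y) z)
| leq_mulDl x y z : lequiv (LMul (LAdd x y) z) (LAdd (LMul x z) (LMul y z))
| leq_mulDr x y z : lequiv (LMul x (LAdd y z)) (LAdd (LMul x y) (LMul x z))
| leq_scaleMl a x y : lequiv (LScale a (LMul x y)) (LMul (LScale a x) y)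
| leq_scaleMr a x y : lequiv (LScale a (LMul x y)) (LMul x (LScale a y))
| leq_vv v : lequiv (LMul (lv v) (lv v)) (lv v)
| leq_vw v w : v <> w -> lequiv (LMul (lv v) (lv w)) LZero
| leq_se e : lequiv (LMul (lv (s e)) (le e)) (le e)
| leq_er e : lequiv (LMul (le e) (lv (r e))) (le e)
| leq_rs e : lequiv (LMul (lv (r e)) (ls e)) (ls e)
| leq_ss e : lequiv (LMul (ls e) (lv (s e))) (ls e)
| leq_CK1 e : lequiv (LMul (ls e) (le e)) (lv (r e))
| leq_CK1' e f : e <> f -> lequiv (LMul (ls e) (le f)) LZero
| leq_CK2 v l : src_enum v l ->
    lequiv (lv v) (lsum (map (fun e => LMul (le e) (ls e)) l)).

Fixpoint chain (l : list Ed) : Prop :=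
  match l with
  | e :: ((f :: _) as l') => r e = s f /\ chain l'
  | _ => True
  end.

Definition is_path (p : list Ed) : Prop := p <> nil /\ chain p.

Definition is_cycle (c : list Ed) : Prop :=
  match c with
  | nil => False
  | e :: es => chain c /\ r (last e es) = s e /\ List.NoDup (map s c)
  end.

Definition has_exit (p : list Ed) : Prop :=
  exists f, ~ List.In f p /\ exists e, List.In e p /\ s f = s e.

Definition lpath (p : list Ed) : lterm :=
  match p with
  | nil => LZero
  | e :: es => foldl (fun t f => LMul t (le f)) (le e) es
  end.

(* t^n for n >= 1 *)
Fixpoint lpow (t : lterm) (n : nat) : lterm :=
  match n with
  | 0 => LZero
  | S m => match m with 0 => t | _ => LMul (lpow t m) t end
  end.

(* f(c) := k_0 v + sum_{i=1}^n k_i c^i, with v = s(e_1) the base of c *)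
Definition poly_cycle (f : {poly K}) (c : list Ed) : lterm :=
  match c with
  | nil => LZero
  | e :: _ =>
      LAdd (LScale f`_0 (lv (s e)))
           (lsum (map (fun i => LScale f`_i (lpow (lpath c) i))
                      (iota 1 (size f).-1)))
  end.

Inductive in_ideal (X : lterm -> Prop) : lterm -> Prop :=
| ii_gen x : X x -> in_ideal X x
| ii_zero : in_ideal X LZero
| ii_add x y : in_ideal X x -> in_ideal X y -> in_ideal X (LAdd x y)
| ii_scale k x : in_ideal X x -> in_ideal X (LScale k x)
| ii_mull t x : in_ideal X x -> in_ideal X (LMul t x)
| ii_mulr x t : in_ideal X x -> in_ideal X (LMul x t)
| ii_equiv x y : lequiv x y -> in_ideal X x -> in_ideal X y.

Inductive in_prod (I J : lterm -> Prop) : lterm -> Prop :=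
| ip_zero : in_prod I J LZero
| ip_mul a b : I a -> J b -> in_prod I J (LMul a b)
| ip_add x y : in_prod I J x -> in_prod I J y -> in_prod I J (LAdd x y)
| ip_equiv x y : lequiv x y -> in_prod I J x -> in_prod I J y.

End Leavitt.

From Pilot Require Import Defs.
From mathcomp Require Import all_boot all_order all_algebra.
From Stdlib Require List.
From Stdlib Require Import Setoid Morphisms Classical.
Local Open Scope ring_scope.
Set Implicit Arguments.
Unset Strict Implicit.
Unset Printing Implicit Defensive.

(* A cycle without exits contains every edge leaving one of its vertices, so its vertex set
   is closed under ranges of edges; two distinct such cycles c and d therefore have disjoint
   vertex sets C and D.  For u in C and w in D we get u L w = 0: the property "u b* x = 0 for
   every u in C and every product b* of ghost edges" holds for x = w, because ghost edges
   move w only to vertices of D, and it survives left multiplication by any generator,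
   because real edges leaving C stay in C.  Since f(c) = f(c) u and g(d) = w g(d) for the
   base vertices u of c and w of d, the elements f(c) and g(d) satisfy f(c) L g(d) = 0 and
   f(c) g(d) = 0, which is what makes the product of the ideals they generate vanish. *)

Section CyclesWithoutExits.
Variables (V Ed : Type) (s r : Ed -> V).

Definition out_closed (C : V -> Prop) : Prop := forall e, C (s e) -> C (r e).

Lemma noexit_edge c e :
  ~ has_exit s c -> List.In (s e) (List.map s c) -> List.In e c.
Proof.
move=> noexit /List.in_map_iff [x [sx cx]].
apply: NNPP => ce; apply: noexit.
by exists e; split => //; exists x.
Qed.

Lemma chain_next e es x : chain s r (e :: es) -> List.In x (e :: es) ->
  x = last e es \/ List.In (r x) (List.map s es).
Proof.
elim: es e => [|f es IH] e /= ch_e; first by case=> [<-|[]]; left.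
case: ch_e => ref ch_f [<-|x_f]; first by right; left.
by case: (IH f ch_f x_f) => [->|]; [left | right; right].
Qed.

Lemma cycle_range c e :
  is_cycle s r c -> List.In e c -> List.In (r e) (List.map s c).
Proof.
case: c => [|e0 es] //= [ch [last_e0 _]] /(chain_next ch) [->|]; first by left.
by right.
Qed.

Lemma out_closed_cycle c :
  is_cycle s r c -> ~ has_exit s c -> out_closed (fun u => List.In u (List.map s c)).
Proof. by move=> cyc noexit e /(noexit_edge noexit) /(cycle_range cyc). Qed.

Section Closure.
Variable Q : V -> Prop.
Hypothesis closedQ : out_closed Q.

Lemma chain_closed_last e es x : chain s r (e :: es) ->
  List.In x (e :: es) -> Q (s x) -> Q (r (last e es)).
Proof.
elim: es e x => [|f es IH] e x /=; first by move=> _ [<-|[]] /closedQ.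
move=> [ref ch_f] [<-|x_f] Qx; last exact: IH x_f Qx.
apply: (IH f f) => //; first by left.
by rewrite -ref; apply: closedQ.
Qed.

Lemma chain_closed_head e es : chain s r (e :: es) ->
  Q (s e) -> forall u, List.In u (List.map s (e :: es)) -> Q u.
Proof.
elim: es e => [|f es IH] e /=; first by move=> _ Qe u [<-|[]].
move=> [ref ch_f] Qe u [<-|u_f] //.
by apply: IH u_f => //; rewrite -ref; apply: closedQ.
Qed.

Lemma cycle_closed c u : is_cycle s r c ->
  List.In u (List.map s c) -> Q u -> forall w, List.In w (List.map s c) -> Q w.
Proof.
case: c => [|e es] // [ch [last_e _]] /List.in_map_iff [x [<- cx]] Qx.
by apply: (chain_closed_head ch); rewrite -last_e; apply: chain_closed_last cx Qx.
Qed.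

End Closure.

Lemma noexit_cycle_sub c d u : is_cycle s r c -> is_cycle s r d -> ~ has_exit s d ->
  List.In u (List.map s c) -> List.In u (List.map s d) -> forall e, List.In e c -> List.In e d.
Proof.
move=> cyc_c cyc_d noexit_d uc ud e ce; apply: (noexit_edge noexit_d).
apply: (cycle_closed (out_closed_cycle cyc_d noexit_d) cyc_c uc ud).
exact: List.in_map.
Qed.

Lemma noexit_cycles_disjoint c d u :
  is_cycle s r c -> is_cycle s r d -> ~ has_exit s c -> ~ has_exit s d ->
  ~ (forall e, List.In e c <-> List.In e d) ->
  List.In u (List.map s c) -> ~ List.In u (List.map s d).
Proof.
move=> cyc_c cyc_d noexit_c noexit_d ne_cd uc ud; apply: ne_cd => e.
by split; exact: (noexit_cycle_sub (u := u)).
Qed.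

End CyclesWithoutExits.

Section LeavittTerms.
Variables (K : fieldType) (V Ed : Type) (s r : Ed -> V).

Local Notation term := (lterm K V Ed).
Local Notation lzero := (LZero K V Ed).
Local Notation vtx := (lv K Ed).
Local Notation edge := (le K V).
Local Notation ghost := (ls K V).
Local Notation leqv := (@lequiv K V Ed s r).
Local Notation "x ≡ y" := (lequiv s r x y) (at level 70, no associativity).
Local Notation "x ⋅ y" := (LMul x y) (at level 40, left associativity).

#[local] Instance lequiv_Equivalence : Equivalence leqv.
Proof. by split; [exact: Defs.leq_refl | exact: Defs.leq_sym | exact: Defs.leq_trans]. Qed.

#[local] Hint Extern 0 (lequiv _ _ _ _) => reflexivity : core.

#[local] Instance LMul_Proper :
  Proper (leqv ==> leqv ==> leqv) (@LMul K V Ed).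
Proof. by move=> x x' xx' y y' yy'; apply: Defs.leq_mul. Qed.

#[local] Instance LAdd_Proper :
  Proper (leqv ==> leqv ==> leqv) (@LAdd K V Ed).
Proof. by move=> x x' xx' y y' yy'; apply: Defs.leq_add. Qed.

#[local] Instance LScale_Proper k : Proper (leqv ==> leqv) (@LScale K V Ed k).
Proof. by move=> x x' xx'; apply: leq_scale. Qed.

Lemma laddxx_eq0 x : x ≡ LAdd x x -> x ≡ lzero.
Proof. by move=> xx; rewrite -(leq_addN s r x) {2}xx -leq_addA leq_addN leq_add0. Qed.

Lemma lmul0r x : lzero ⋅ x ≡ lzero.
Proof. by apply: laddxx_eq0; rewrite -leq_mulDl leq_add0. Qed.

Lemma lmulr0 x : x ⋅ lzero ≡ lzero.
Proof. by apply: laddxx_eq0; rewrite -leq_mulDr leq_add0. Qed.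

Lemma lscaler0 k : LScale k lzero ≡ lzero.
Proof. by apply: laddxx_eq0; rewrite -leq_scaleDr leq_add0. Qed.

Lemma ghost_vtx_eq0 e p : s e <> p -> ghost e ⋅ vtx p ≡ lzero.
Proof. by move=> ep; rewrite -(leq_ss K s r e) -leq_mulA (leq_vw _ _ _ ep) lmulr0. Qed.

Lemma vtx_edge_eq0 u e : u <> s e -> vtx u ⋅ edge e ≡ lzero.
Proof. by move=> ue; rewrite -(leq_se K s r e) leq_mulA (leq_vw _ _ _ ue) lmul0r. Qed.

(* [ghost_word [:: e1; ...; ek] x] is [ek^* ... e1^* x]. *)
Definition ghost_word (l : seq Ed) (x : term) : term :=
  foldl (fun t e => ghost e ⋅ t) x l.

Lemma ghost_word_cons e l x : ghost_word (e :: l) x = ghost_word l (ghost e ⋅ x).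
Proof. by []. Qed.

#[local] Instance ghost_word_Proper l : Proper (leqv ==> leqv) (ghost_word l).
Proof. by elim: l => [|e l IH] x y xy //; rewrite !ghost_word_cons; apply: IH; rewrite xy. Qed.

Lemma ghost_word0 l : ghost_word l lzero ≡ lzero.
Proof. by elim: l => [|e l IH] //; rewrite ghost_word_cons lmulr0. Qed.

Lemma ghost_wordD l x y :
  ghost_word l (LAdd x y) ≡ LAdd (ghost_word l x) (ghost_word l y).
Proof. by elim: l x y => [|e l IH] x y //; rewrite !ghost_word_cons leq_mulDr IH. Qed.

Lemma ghost_wordZ l k x : ghost_word l (LScale k x) ≡ LScale k (ghost_word l x).
Proof. by elim: l x => [|e l IH] x //; rewrite !ghost_word_cons -leq_scaleMr IH. Qed.

Definition ghost_null (C : V -> Prop) (x : term) : Prop :=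
  forall l u, C u -> vtx u ⋅ ghost_word l x ≡ lzero.

Section GhostNull.
Variable C : V -> Prop.
Hypothesis closedC : out_closed s r C.

#[local] Instance ghost_null_Proper : Proper (leqv ==> iff) (ghost_null C).
Proof. by move=> x y xy; split=> nx l u Cu; [rewrite -xy | rewrite xy]; apply: nx. Qed.

Lemma ghost_null0 : ghost_null C lzero.
Proof. by move=> l u Cu; rewrite ghost_word0 lmulr0. Qed.

Lemma ghost_nullD x y : ghost_null C x -> ghost_null C y -> ghost_null C (LAdd x y).
Proof. by move=> nx ny l u Cu; rewrite ghost_wordD leq_mulDr nx // ny // leq_add0. Qed.

Lemma ghost_nullZ k x : ghost_null C x -> ghost_null C (LScale k x).
Proof. by move=> nx l u Cu; rewrite ghost_wordZ -leq_scaleMr nx // lscaler0. Qed.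

Lemma ghost_null_ghost e x : ghost_null C x -> ghost_null C (ghost e ⋅ x).
Proof. by move=> nx l; apply: nx (e :: l). Qed.

Lemma ghost_null_vtx p x : ghost_null C x -> ghost_null C (vtx p ⋅ x).
Proof.
move=> nx [|e l] u Cu.
  rewrite /= leq_mulA; have [<-|up] := classic (u = p).
    by rewrite leq_vv; apply: nx [::] u Cu.
  by rewrite (leq_vw _ _ _ up) lmul0r.
rewrite ghost_word_cons leq_mulA.
have [<-|ep] := classic (s e = p); first by rewrite leq_ss; apply: nx (e :: l) u Cu.
by rewrite (ghost_vtx_eq0 ep) lmul0r ghost_word0 lmulr0.
Qed.

Lemma ghost_null_edge e x : ghost_null C x -> ghost_null C (edge e ⋅ x).
Proof.
move=> nx [|f l] u Cu; last first.
  rewrite ghost_word_cons leq_mulA.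
  have [->|fe] := classic (f = e); first by rewrite leq_CK1; apply: ghost_null_vtx.
  by rewrite (leq_CK1' _ _ _ fe) lmul0r ghost_word0 lmulr0.
rewrite /=; have [eu|ue] := classic (u = s e); last first.
  by rewrite leq_mulA (vtx_edge_eq0 ue) lmul0r.
have Cre : C (r e) by apply: closedC; rewrite -eu.
by rewrite -(leq_er K s r e) -leq_mulA (nx [::] _ Cre) !lmulr0.
Qed.

Lemma ghost_null_mull x y : ghost_null C x -> ghost_null C (y ⋅ x).
Proof.
elim: y x => [|[p|e|e]|y1 IH1 y2 IH2|y1 IH1 y2 IH2|k y IH] x nx.
- by rewrite lmul0r; apply: ghost_null0.
- exact: ghost_null_vtx.
- exact: ghost_null_edge.
- exact: ghost_null_ghost.
- by rewrite leq_mulDl; apply: ghost_nullD; [apply: IH1 | apply: IH2].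
- by rewrite -leq_mulA; apply: IH1; apply: IH2.
- by rewrite -leq_scaleMl; apply: ghost_nullZ; apply: IH.
Qed.

Section Disjoint.
Variable D : V -> Prop.
Hypotheses (closedD : out_closed s r D) (disjCD : forall v, C v -> ~ D v).

Lemma ghost_null_vtx_mul w y : D w -> ghost_null C (vtx w ⋅ y).
Proof.
move=> Dw l; elim: l w y Dw => [|e l IH] w y Dw u Cu.
  have uw : u <> w by move=> uw; apply: (disjCD Cu); rewrite uw.
  by rewrite /= leq_mulA (leq_vw _ _ _ uw) lmul0r.
rewrite ghost_word_cons leq_mulA.
have [ew|ew] := classic (s e = w); last first.
  by rewrite (ghost_vtx_eq0 ew) lmul0r ghost_word0 lmulr0.
have Dre : D (r e) by apply: closedD; rewrite ew.
by rewrite -ew leq_ss -(leq_rs K s r e) -leq_mulA; apply: IH.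
Qed.

Lemma vtx_sandwich_eq0 u w : C u -> D w -> forall t, vtx u ⋅ t ⋅ vtx w ≡ lzero.
Proof.
move=> Cu Dw t; have nw : ghost_null C (vtx w) by rewrite -leq_vv; apply: ghost_null_vtx_mul.
by rewrite -leq_mulA; apply: (ghost_null_mull t nw [::]).
Qed.

End Disjoint.
End GhostNull.

Definition lunit (v : V) (x : term) : Prop := vtx v ⋅ x ≡ x.
Definition runit (v : V) (x : term) : Prop := x ⋅ vtx v ≡ x.

Lemma lsum_map_closed (P : term -> Prop) (F : nat -> term) l :
  P lzero -> (forall x y, P x -> P y -> P (LAdd x y)) -> (forall i, P (F i)) ->
  P (lsum (map F l)).
Proof. by move=> P0 PD PF; elim: l => [|i l IH] //=; apply: PD. Qed.

Lemma lunit0 v : lunit v lzero.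
Proof. exact: lmulr0. Qed.

Lemma runit0 v : runit v lzero.
Proof. exact: lmul0r. Qed.

Lemma lunitD v x y : lunit v x -> lunit v y -> lunit v (LAdd x y).
Proof. by rewrite /lunit leq_mulDr => -> ->. Qed.

Lemma runitD v x y : runit v x -> runit v y -> runit v (LAdd x y).
Proof. by rewrite /runit leq_mulDl => -> ->. Qed.

Lemma lunitZ v k x : lunit v x -> lunit v (LScale k x).
Proof. by rewrite /lunit -leq_scaleMr => ->. Qed.

Lemma runitZ v k x : runit v x -> runit v (LScale k x).
Proof. by rewrite /runit -leq_scaleMl => ->. Qed.

Lemma lunit_mulr v x y : lunit v x -> lunit v (x ⋅ y).
Proof. by rewrite /lunit leq_mulA => ->. Qed.

Lemma runit_mull v x y : runit v y -> runit v (x ⋅ y).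
Proof. by rewrite /runit -leq_mulA => ->. Qed.

Lemma lpow_lunit v t i : lunit v t -> lunit v (lpow t i).
Proof. by move=> vt; elim: i => [|[|i] IH] //=; [apply: lunit0 | apply: lunit_mulr]. Qed.

Lemma lpow_runit v t i : runit v t -> runit v (lpow t i).
Proof. by move=> tv; case: i => [|[|i]] //=; [apply: runit0 | apply: runit_mull]. Qed.

Lemma lpath_lunit e es : lunit (s e) (lpath K V (e :: es)).
Proof.
rewrite /=; elim: es (edge e) (leq_se K s r e) => [|f es IH] x ex //=.
by apply: IH; apply: lunit_mulr.
Qed.

Lemma lpath_runit e es : runit (r (last e es)) (lpath K V (e :: es)).
Proof.
case: es => [|f es] /=; first exact: leq_er.
elim: es (edge e) f => [|g es IH] x f /=; last exact: IH.
by rewrite /runit -leq_mulA leq_er.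
Qed.

Lemma poly_cycle_lunit f e es : lunit (s e) (poly_cycle s f (e :: es)).
Proof.
apply: lunitD; first by apply: lunitZ; apply: leq_vv.
apply: lsum_map_closed => [|x y|i]; [exact: lunit0 | exact: lunitD |].
by apply: lunitZ; apply: lpow_lunit; apply: lpath_lunit.
Qed.

Lemma poly_cycle_runit f e es :
  is_cycle s r (e :: es) -> runit (s e) (poly_cycle s f (e :: es)).
Proof.
move=> [_ [last_e _]]; apply: runitD; first by apply: runitZ; apply: leq_vv.
apply: lsum_map_closed => [|x y|i]; [exact: runit0 | exact: runitD |].
by apply: runitZ; apply: lpow_runit; rewrite -last_e; apply: lpath_runit.
Qed.

(* [x L y = 0] together with [x y = 0]: without a unit in [L] the latter is not a special
   case of the former. *)
Definition sandwich_null (x y : term) : Prop :=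
  x ⋅ y ≡ lzero /\ forall t, x ⋅ t ⋅ y ≡ lzero.

Lemma sandwich_null_absorb x y a b :
  x ⋅ a ≡ x -> b ⋅ y ≡ y -> sandwich_null a b -> sandwich_null x y.
Proof.
move=> xa yb [ab atb]; split=> [|t]; rewrite -xa -yb.
  by rewrite leq_mulA -[x ⋅ a ⋅ b]leq_mulA ab lmulr0 lmul0r.
by rewrite leq_mulA -[x ⋅ a ⋅ t]leq_mulA -[x ⋅ (a ⋅ t) ⋅ b]leq_mulA atb lmulr0 lmul0r.
Qed.

Section IdealProduct.
Variables X Y : term -> Prop.
Hypothesis XY : forall x y, X x -> Y y -> sandwich_null x y.

Lemma sandwich_null_ideal x b : X x -> in_ideal s r Y b -> sandwich_null x b.
Proof.
move=> Xx; elim=> {b} [y Yy||b b' _ [xb xtb] _ [xb' xtb']|k b _ [xb xtb]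
                     |t b _ [xb xtb]|b t _ [xb xtb]|b b' bb' _ [xb xtb]].
- exact: XY.
- by split=> [|t]; rewrite lmulr0.
- by split=> [|t]; rewrite leq_mulDr ?xb ?xb' ?xtb ?xtb' leq_add0.
- by split=> [|t]; rewrite -leq_scaleMr ?xb ?xtb lscaler0.
- by split=> [|t']; rewrite leq_mulA ?xtb // -[x ⋅ t' ⋅ t]leq_mulA xtb.
- by split=> [|t']; rewrite leq_mulA ?xb ?xtb lmul0r.
- by split=> [|t]; rewrite -bb'.
Qed.

Lemma ideal_mul_eq0 a b : in_ideal s r X a -> in_ideal s r Y b -> a ⋅ b ≡ lzero.
Proof.
move=> Ia; elim: Ia b => {a} [x Xx||a a' _ IH _ IH'|k a _ IH
                             |t a _ IH|a t _ IH|a a' aa' _ IH] b Yb.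
- exact: (sandwich_null_ideal Xx Yb).1.
- exact: lmul0r.
- by rewrite leq_mulDl IH // IH' // leq_add0.
- by rewrite -leq_scaleMl IH // lscaler0.
- by rewrite -leq_mulA IH // lmulr0.
- by rewrite -leq_mulA IH //; apply: ii_mull.
- by rewrite -aa' IH.
Qed.

Lemma ideal_prod_eq0 z : in_prod s r (in_ideal s r X) (in_ideal s r Y) z -> z ≡ lzero.
Proof.
elim=> {z} [|a b Ia Ib|z z' _ IH _ IH'|z z' zz' _ IH] //.
- exact: ideal_mul_eq0.
- by rewrite IH IH' leq_add0.
- by rewrite -zz'.
Qed.

End IdealProduct.

Lemma poly_cycle_sandwich_null f g c d :
  is_cycle s r c -> is_cycle s r d -> ~ has_exit s c -> ~ has_exit s d ->
  ~ (forall e, List.In e c <-> List.In e d) ->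
  sandwich_null (poly_cycle s f c) (poly_cycle s g d).
Proof.
case: c => [|e es] // cyc_c; case: d => [|e' es'] // cyc_d noexit_c noexit_d ne_cd.
have se_c : List.In (s e) (List.map s (e :: es)) by left.
have se'_d : List.In (s e') (List.map s (e' :: es')) by left.
have disj := noexit_cycles_disjoint cyc_c cyc_d noexit_c noexit_d ne_cd.
apply: sandwich_null_absorb (poly_cycle_runit f cyc_c) (poly_cycle_lunit g e' es') _.
split; first by apply: leq_vw => ee'; apply: (disj _ se_c); rewrite ee'.
exact: (vtx_sandwich_eq0 (out_closed_cycle cyc_c noexit_c)
          (out_closed_cycle cyc_d noexit_d) disj se_c se'_d).
Qed.

End LeavittTerms.

Theorem lemma2p2 (K : fieldType) (V Ed : Type) (s r : Ed -> V)
  (hV : inhabited V) (c d : list Ed) (f g : {poly K}) :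
  is_cycle s r c -> is_cycle s r d ->
  ~ (forall e, List.In e c <-> List.In e d) ->
  ~ has_exit s c -> ~ has_exit s d ->
  f`_0 != 0 -> g`_0 != 0 ->
  forall t : lterm K V Ed,
    in_prod s r (in_ideal s r (fun x => x = poly_cycle s f c))
            (in_ideal s r (fun x => x = poly_cycle s g d)) t ->
    lequiv s r t (LZero K V Ed).
Proof.
move=> cyc_c cyc_d ne_cd noexit_c noexit_d _ _ t.
apply: ideal_prod_eq0 => _ _ -> ->.
exact: poly_cycle_sandwich_null.
Qed.
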